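(* With the notation of the context, let $\hat u=\frac{\ell}{\ell-1}u$, and let $(\bar x,\bar y)$ be an integral solution of the capacitated facility location instance with client set $C_r$ and capacity $\hat u$ that serves every client of $C_r$, violates capacities by a factor at most $\beta$ (each open facility $i$ has $\sum_{j\in C_r}\bar x_{ij}\le\beta\hat u$), and has cost $\sum_{j\in C_r}\sum_i c(i,j)\bar x_{ij}+\sum_i f_i\bar y_i\le \alpha\big(\sum_{j\in C_r}\sum_i c(i,j)\hat x_{ij}+\sum_i f_i\hat y_i\big)$. Then $(\bar x,\bar y,\hat z)$ is an integral solution of the CFLPP instance (clients in $C_p$ pay penalty, clients in $C_r$ are served) whose cost is at most $\max\{\alpha(1+\frac{1}{\ell-1}),\ \ell\}\cdot\mathrm{OPT}_{LP}$ and in which each open facility serves at most $\beta(1+\frac{1}{\ell-1})u$ clients, for every $\ell\ge 2$.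
   Context: Instance of CFLPP: clients $C$, facilities $F$, opening costs $f_i\ge0$, metric service costs $c(i,j)\ge0$, penalties $p_j\ge0$, uniform capacity $u$. $\mathrm{LP}_{CFLPP}$: minimize $\sum_{j}\sum_{i}c(i,j)x_{ij}+\sum_if_iy_i+\sum_jp_jz_j$ subject to $\sum_ix_{ij}+z_j\ge1$ ($j\in C$), $\sum_jx_{ij}\le u y_i$ ($i\in F$), $x_{ij}\le y_i$, and $x,y,z\in[0,1]$. Let $\rho^*=(x^*,y^*,z^* )$ be an optimal solution with value $\mathrm{OPT}_{LP}$ and $\sum_ix^*_{ij}\le1$ for all $j$. Fix $\ell\ge2$, $C_p=\{j: z^*_j\ge1/\ell\}$, $C_r=C\setminus C_p$. Define $\hat z_j=1$, $\hat x_{ij}=0$ for $j\in C_p$; $\hat z_j=0$, $\hat x_{ij}=x^*_{ij}/\sum_{i'}x^*_{i'j}$ for $j\in C_r$; and $\hat y_i=\min\{1, y^*_i\max_{j\in C_r:x^*_{ij}>0}\hat x_{ij}/x^*_{ij}\}$ (or $y^*_i$ if the max is over an empty set). Then $(\hat x|_{C_r},\hat y)$ is feasible for the natural LP of capacitated facility location on clients $C_r$ with capacity $\frac{\ell}{\ell-1}u$. *)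

From mathcomp Require Import all_boot all_order all_algebra.
Set Implicit Arguments. Unset Strict Implicit. Unset Printing Implicit Defensive.
Import Order.TTheory GRing.Theory Num.Theory.
Local Open Scope ring_scope.

Section CFLPP.
Variables (R : realFieldType) (F C : finType).

Definition metric_costs (c : F -> C -> R) : Prop :=
  (forall i j, 0 <= c i j) /\
  (forall i i' j j', c i j <= c i j' + c i' j' + c i' j).

Definition is01 (r : R) : Prop := r = 0 \/ r = 1.

Definition cflpp_cost (c : F -> C -> R) (f : F -> R) (p : C -> R)
  (x : F -> C -> R) (y : F -> R) (z : C -> R) : R :=
  \sum_(j : C) \sum_(i : F) c i j * x i j + \sum_(i : F) f i * y i
  + \sum_(j : C) p j * z j.

Definition lp_cflpp_feasible (u : R)
  (x : F -> C -> R) (y : F -> R) (z : C -> R) : Prop :=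
  (forall j, 1 <= \sum_(i : F) x i j + z j) /\
  (forall i, \sum_(j : C) x i j <= u * y i) /\
  (forall i j, x i j <= y i) /\
  (forall i j, 0 <= x i j <= 1) /\
  (forall i, 0 <= y i <= 1) /\
  (forall j, 0 <= z j <= 1).

Definition in_Cp (l : R) (zs : C -> R) (j : C) : bool := 1 / l <= zs j.
Definition in_Cr (l : R) (zs : C -> R) (j : C) : bool := ~~ in_Cp l zs j.

Definition zhat (l : R) (zs : C -> R) (j : C) : R :=
  if in_Cp l zs j then 1 else 0.

Definition xhat (l : R) (xs : F -> C -> R) (zs : C -> R) (i : F) (j : C) : R :=
  if in_Cp l zs j then 0 else xs i j / \sum_(i' : F) xs i' j.

Definition yhat (l : R) (xs : F -> C -> R) (ys : F -> R) (zs : C -> R)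
  (i : F) : R :=
  if [exists j, in_Cr l zs j && (0 < xs i j)] then
    Num.min 1 (ys i * \big[Num.max/0]_(j : C | in_Cr l zs j && (0 < xs i j))
                         (xhat l xs zs i j / xs i j))
  else ys i.

Definition cfl_cost_Cr (l : R) (zs : C -> R) (c : F -> C -> R) (f : F -> R)
  (x : F -> C -> R) (y : F -> R) : R :=
  \sum_(j : C | in_Cr l zs j) \sum_(i : F) c i j * x i j
  + \sum_(i : F) f i * y i.

Definition ext_Cr (l : R) (zs : C -> R) (x : F -> C -> R) (i : F) (j : C) : R :=
  if in_Cr l zs j then x i j else 0.

End CFLPP.

From mathcomp Require Import all_boot all_order all_algebra.
From mathcomp Require Import ring lra.
Set Implicit Arguments. Unset Strict Implicit. Unset Printing Implicit Defensive.
Import Order.TTheory GRing.Theory Num.Theory.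
Local Open Scope ring_scope.

(* Write k = l/(l-1) = 1 + 1/(l-1).  A client j of C_r has z*_j < 1/l, hence
   its LP service mass S_j = sum_i x*_ij exceeds 1 - 1/l, i.e. 1/S_j <= k.
   Consequently the normalised assignment xhat_ij = x*_ij/S_j is at most
   k x*_ij, and the rescaled opening yhat_i is at most k y*_i, so the
   capacitated facility location LP value of (xhat, yhat) on C_r is at most
   k times the assignment and opening part of OPT_LP.  A client of C_p has
   z*_j >= 1/l, so paying its full penalty costs at most l p_j z*_j. *)

Lemma blowup_factorE (R : realFieldType) (l : R) : 1 < l ->
  1 + 1 / (l - 1) = l / (l - 1).
Proof. by move=> hl; field; lra. Qed.

Lemma served_mass_inv_le (R : realFieldType) (S z l : R) :
  1 < l -> 1 <= S + z -> z < 1 / l -> 0 < S /\ S^-1 <= l / (l - 1).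
Proof.
move=> hl hs hz.
have l0 : 0 < l by lra.
have l1 : 0 < l - 1 by lra.
have zl : z * l < 1 by rewrite -ltr_pdivlMr.
have Sl : l - 1 < S * l by nra.
have S0 : 0 < S by nra.
split=> //.
by rewrite -[S^-1]mul1r ler_pdivrMr // mulrAC ler_pdivlMr //; nra.
Qed.

Lemma rounded_penalty_le (R : realFieldType) (p z l : R) :
  0 < l -> 0 <= p -> 0 <= z ->
  p * (if 1 / l <= z then 1 else 0) <= l * (p * z).
Proof.
move=> l0 p0 z0; case: ifP => hz; last by rewrite mulr0 !mulr_ge0 // ltW.
move: hz; rewrite ler_pdivrMr // => hz.
by rewrite mulr1 mulrCA -[X in X <= _]mulr1 ler_wpM2l // mulrC.
Qed.

Lemma scaled_bound_le (R : realDomainType) (alpha k m A B : R) :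
  0 <= A -> A <= k * B -> 0 <= B -> 0 <= m -> alpha * k <= m ->
  alpha * A <= m * B.
Proof.
move=> A0 AkB B0 m0 akm; case: (lerP 0 alpha) => ha.
  apply: (le_trans (ler_wpM2l ha AkB)); rewrite mulrA; exact: ler_wpM2r.
by apply: (@le_trans _ _ 0); rewrite ?mulr_ge0 // nmulr_rle0.
Qed.

Section Rounding.
Variables (R : realFieldType) (F C : finType).
Variables (xs : F -> C -> R) (ys : F -> R) (zs : C -> R) (l : R).
Hypothesis hl : 1 < l.
Hypothesis hx0 : forall i j, 0 <= xs i j.
Hypothesis hy0 : forall i, 0 <= ys i.
Hypothesis hcov : forall j, 1 <= \sum_(i : F) xs i j + zs j.

Lemma in_CrE j : in_Cr l zs j = (zs j < 1 / l).
Proof. by rewrite /in_Cr /in_Cp -ltNge. Qed.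

Lemma in_Cp_Cr {j} : in_Cr l zs j -> in_Cp l zs j = false.
Proof. by rewrite /in_Cr; case: (in_Cp _ _ _). Qed.

Lemma Cr_mass {j} : in_Cr l zs j ->
  0 < \sum_(i : F) xs i j /\ (\sum_(i : F) xs i j)^-1 <= l / (l - 1).
Proof. by rewrite in_CrE => hj; apply: served_mass_inv_le (hcov j) hj. Qed.

Lemma factor_ge1 : 1 <= l / (l - 1).
Proof. by rewrite ler_pdivlMr ?subr_gt0 //; lra. Qed.

Lemma xhat_ge0 i j : 0 <= xhat l xs zs i j.
Proof. by rewrite /xhat; case: ifP => // _; rewrite divr_ge0 ?sumr_ge0. Qed.

Lemma xhat_le i j : in_Cr l zs j -> xhat l xs zs i j <= l / (l - 1) * xs i j.
Proof.
move=> hj; rewrite /xhat in_Cp_Cr // mulrC.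
by apply: ler_wpM2r => //; case: (Cr_mass hj).
Qed.

Lemma yhat_ratio_bound {i j} : in_Cr l zs j -> 0 < xs i j ->
  0 <= xhat l xs zs i j / xs i j <= l / (l - 1).
Proof.
move=> hj xp; rewrite /xhat in_Cp_Cr // mulrAC divff ?mul1r ?gt_eqF //.
by have [S0 Sk] := Cr_mass hj; rewrite Sk invr_ge0 ltW.
Qed.

Lemma yhat_bound i : 0 <= yhat l xs ys zs i <= l / (l - 1) * ys i.
Proof.
rewrite /yhat; case: ifP => _; last first.
  by rewrite hy0 /= -[X in X <= _]mul1r ler_wpM2r // factor_ge1.
set M := \big[_/_]_(j | _) _.
have M0 : 0 <= M.
  apply: (big_ind (fun x => 0 <= x)) => // [x y hx _|j /andP[hj xp]].
    by rewrite le_max hx.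
  by case/andP: (yhat_ratio_bound hj xp).
have Mk : M <= l / (l - 1).
  apply: (big_ind (fun x => x <= _)) => [|x y hx hy|j /andP[hj xp]].
  - by apply: le_trans factor_ge1.
  - by rewrite ge_max hx hy.
  - by case/andP: (yhat_ratio_bound hj xp).
rewrite le_min ler01 mulr_ge0 //= ge_min; apply/orP; right.
by rewrite mulrC ler_wpM2r.
Qed.

Lemma Cr_cost_le (c : F -> C -> R) (f : F -> R) :
  (forall i j, 0 <= c i j) -> (forall i, 0 <= f i) ->
  cfl_cost_Cr l zs c f (xhat l xs zs) (yhat l xs ys zs)
  <= l / (l - 1) * (\sum_(j : C) \sum_(i : F) c i j * xs i j
                    + \sum_(i : F) f i * ys i).
Proof.
move=> c0 f0; have k0 := le_trans ler01 factor_ge1.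
rewrite mulrDr /cfl_cost_Cr; apply: lerD.
  rewrite big_mkcond /= mulr_sumr; apply: ler_sum => j _.
  case: ifP => hj; last by rewrite mulr_ge0 ?sumr_ge0 // => i _; rewrite mulr_ge0.
  rewrite mulr_sumr; apply: ler_sum => i _.
  by rewrite mulrCA ler_wpM2l // xhat_le.
rewrite mulr_sumr; apply: ler_sum => i _.
by rewrite mulrCA ler_wpM2l //; case/andP: (yhat_bound i).
Qed.

Lemma Cr_cost_ge0 (c : F -> C -> R) (f : F -> R) :
  (forall i j, 0 <= c i j) -> (forall i, 0 <= f i) ->
  0 <= cfl_cost_Cr l zs c f (xhat l xs zs) (yhat l xs ys zs).
Proof.
move=> c0 f0; apply: addr_ge0.
  by apply: sumr_ge0 => j _; apply: sumr_ge0 => i _; rewrite mulr_ge0 ?xhat_ge0.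
by apply: sumr_ge0 => i _; rewrite mulr_ge0 //; case/andP: (yhat_bound i).
Qed.

Lemma penalty_cost_le (p : C -> R) :
  (forall j, 0 <= p j) -> (forall j, 0 <= zs j) ->
  \sum_(j : C) p j * zhat l zs j <= l * \sum_(j : C) p j * zs j.
Proof.
move=> p0 z0; rewrite mulr_sumr; apply: ler_sum => j _.
by rewrite /zhat /in_Cp rounded_penalty_le // (lt_trans ltr01 hl).
Qed.

End Rounding.

Section IntegralSolution.
Variables (R : realFieldType) (F C : finType).
Variables (zs : C -> R) (l : R) (xb : F -> C -> R) (yb : F -> R).

Lemma combined_costE (c : F -> C -> R) (f : F -> R) (p : C -> R) :
  cflpp_cost c f p (ext_Cr l zs xb) yb (zhat l zs)
  = cfl_cost_Cr l zs c f xb yb + \sum_(j : C) p j * zhat l zs j.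
Proof.
rewrite /cflpp_cost /cfl_cost_Cr; congr (_ + _ + _).
rewrite [RHS]big_mkcond /=; apply: eq_bigr => j _; rewrite /ext_Cr.
by case: ifP => // _; rewrite big1 // => i _; rewrite mulr0.
Qed.

Lemma combined_integral :
  (forall i j, in_Cr l zs j -> is01 (xb i j)) ->
  (forall i j, is01 (ext_Cr l zs xb i j)) /\ (forall j, is01 (zhat l zs j)).
Proof.
move=> hxb01; split=> [i j|j]; rewrite /ext_Cr /zhat.
  by case: ifP => h; [apply: hxb01 | left].
by case: ifP; [right | left].
Qed.

Lemma combined_assign_open i j :
  is01 (yb i) -> (in_Cr l zs j -> xb i j <= yb i) -> ext_Cr l zs xb i j <= yb i.
Proof.
rewrite /ext_Cr => hy hxy; case: ifP => h; first exact: hxy.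
by case: hy => ->; rewrite ?ler01.
Qed.

Lemma combined_covers j :
  (in_Cr l zs j -> 1 <= \sum_(i : F) xb i j) ->
  1 <= \sum_(i : F) ext_Cr l zs xb i j + zhat l zs j.
Proof.
rewrite /ext_Cr /zhat /in_Cr; case: ifP => hj /= hserve.
  by rewrite big1 ?add0r.
by rewrite addr0; apply: hserve.
Qed.

Lemma combined_loadE i :
  \sum_(j : C) ext_Cr l zs xb i j = \sum_(j : C | in_Cr l zs j) xb i j.
Proof. by rewrite [RHS]big_mkcond. Qed.

End IntegralSolution.

Theorem lemma1 (R : realFieldType) (F C : finType)
  (f : F -> R) (c : F -> C -> R) (p : C -> R) (u : R)
  (hf : forall i, 0 <= f i) (hc : metric_costs c) (hp : forall j, 0 <= p j)
  (hu : 0 <= u)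
  (xs : F -> C -> R) (ys : F -> R) (zs : C -> R)
  (hfeas : lp_cflpp_feasible u xs ys zs)
  (hopt : forall x y z, lp_cflpp_feasible u x y z ->
            cflpp_cost c f p xs ys zs <= cflpp_cost c f p x y z)
  (hsum1 : forall j, \sum_(i : F) xs i j <= 1)
  (l : R) (hl : 2 <= l)
  (alpha beta : R)
  (xb : F -> C -> R) (yb : F -> R)
  (hxb01 : forall i j, in_Cr l zs j -> is01 (xb i j))
  (hyb01 : forall i, is01 (yb i))
  (hxbyb : forall i j, in_Cr l zs j -> xb i j <= yb i)
  (hserve : forall j, in_Cr l zs j -> 1 <= \sum_(i : F) xb i j)
  (hcap : forall i, yb i = 1 ->
            \sum_(j : C | in_Cr l zs j) xb i j <= beta * (l / (l - 1) * u))
  (hcost : cfl_cost_Cr l zs c f xb yb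
           <= alpha * cfl_cost_Cr l zs c f (xhat l xs zs) (yhat l xs ys zs)) :
  let xe := ext_Cr l zs xb in
  let zh := zhat l zs in
  ((forall i j, is01 (xe i j)) /\ (forall i, is01 (yb i)) /\ (forall j, is01 (zh j))) /\
  (forall j, 1 <= \sum_(i : F) xe i j + zh j) /\
  (forall i j, xe i j <= yb i) /\
  cflpp_cost c f p xe yb zh
        <= Num.max (alpha * (1 + 1 / (l - 1))) l * cflpp_cost c f p xs ys zs /\
  (forall i, yb i = 1 -> \sum_(j : C) xe i j <= beta * (1 + 1 / (l - 1)) * u).
Proof.
move=> xe zh; case: hfeas => [hcov [_ [_ [hx01 [hy01 hz01]]]]].
have l1 : 1 < l by lra.
have hx0 i j : 0 <= xs i j by case/andP: (hx01 i j).
have hy0 i : 0 <= ys i by case/andP: (hy01 i).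
have hz0 j : 0 <= zs j by case/andP: (hz01 j).
have c0 := proj1 hc.
rewrite blowup_factorE //; split; [|split; [|split; [|split]]].
- by have [? ?] := combined_integral hxb01.
- by move=> j; apply: combined_covers; apply: hserve.
- by move=> i j; apply: combined_assign_open => //; apply: hxbyb.
- set M := Num.max _ _.
  have Ml : l <= M by rewrite le_max lexx orbT.
  have Mak : alpha * (l / (l - 1)) <= M by rewrite le_max lexx.
  have M0 : 0 <= M by apply: le_trans Ml; lra.
  have XY0 : 0 <= \sum_(j : C) \sum_(i : F) c i j * xs i j + \sum_(i : F) f i * ys i.
    rewrite addr_ge0 ?sumr_ge0 // => [j _|i _]; last by rewrite mulr_ge0.
    by rewrite sumr_ge0 // => i _; rewrite mulr_ge0.
  have served := scaled_bound_le (Cr_cost_ge0 l1 hx0 hy0 hcov c0 hf)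
    (Cr_cost_le l1 hx0 hy0 hcov c0 hf) XY0 M0 Mak.
  have penalised : \sum_(j : C) p j * zh j <= M * \sum_(j : C) p j * zs j.
    apply: le_trans (penalty_cost_le l1 hp hz0) (ler_wpM2r _ Ml).
    by rewrite sumr_ge0 // => j _; rewrite mulr_ge0.
  rewrite combined_costE /cflpp_cost mulrDr.
  exact: lerD (le_trans hcost served) penalised.
- by move=> i hi; rewrite combined_loadE -mulrA; apply: hcap.
Qed.
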